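(* Let ${\cal H}$ be a hypergraph. Then: (i) if ${\cal H}={\cal H}_1\odot{\cal H}_2$, then $\overline{\cal H}=\overline{{\cal H}_2}\odot\overline{{\cal H}_1}$ (where both gluings use the same new vertex); (ii) if $z$ is a vertex of ${\cal H}$ such that ${\cal H}$ is $z$-decomposable, then $\overline{\cal H}$ is also $z$-decomposable; (iii) if $u$ is an isolated or a universal vertex of ${\cal H}$, then ${\cal H}$ is $u$-decomposable.
   Context: A hypergraph ${\cal H}=(V,{\cal E})$ consists of a finite vertex set $V$ and a set ${\cal E}$ of subsets of $V$. The complement $\overline{\cal H}$ has vertex set $V$ and hyperedges $\{V\setminus e: e\in{\cal E}\}$. Given vertex-disjoint hypergraphs ${\cal H}_1=(V_1,{\cal E}_1)$, ${\cal H}_2=(V_2,{\cal E}_2)$ and a new vertex $z\notin V_1\cup V_2$, the gluing ${\cal H}_1\odot{\cal H}_2$ has vertex set $V_1\cup V_2\cup\{z\}$ and hyperedge set $\{\{z\}\cup e: e\in{\cal E}_1\}\cup\{V_1\cup e: e\in{\cal E}_2\}$. For a vertex $z$, ${\cal H}$ is $z$-decomposable if for every two hyperedges $e,f$ with $z\in e\setminus f$ we have $e\setminus\{z\}\subseteq f$; equivalently, $V=\{z\}\cup V_1\cup V_2$ (disjoint) and ${\cal H}={\cal H}_1\odot{\cal H}_2$ for some hypergraphs ${\cal H}_1$ on $V_1$ and ${\cal H}_2$ on $V_2$ with new vertex $z$. A vertex is universal (resp. isolated) if it is contained in all (resp. no) hyperedges. *)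

From mathcomp Require Import all_boot.
Set Implicit Arguments. Unset Strict Implicit. Unset Printing Implicit Defensive.

Section Hypergraphs.
Variable T : finType.

Record hypergraph := Hypergraph { hverts : {set T}; hedges : {set {set T}} }.

Definition is_hypergraph (H : hypergraph) : Prop :=
  forall e, e \in hedges H -> e \subset hverts H.

Definition hcompl (H : hypergraph) : hypergraph :=
  Hypergraph (hverts H) [set hverts H :\: e | e in hedges H].

Definition glue (H1 H2 : hypergraph) (z : T) : hypergraph :=
  Hypergraph (hverts H1 :|: hverts H2 :|: [set z])
    ([set z |: e | e in hedges H1] :|: [set hverts H1 :|: e | e in hedges H2]).

Definition decomposable (H : hypergraph) (z : T) : Prop :=
  forall e f, e \in hedges H -> f \in hedges H ->
    z \in e -> z \notin f -> e :\ z \subset f.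

Definition universal (H : hypergraph) (u : T) : Prop :=
  forall e, e \in hedges H -> u \in e.
Definition isolated (H : hypergraph) (u : T) : Prop :=
  forall e, e \in hedges H -> u \notin e.

End Hypergraphs.

From mathcomp Require Import all_boot.

(** Each hyperedge of a gluing is either [z] plus an edge of the first part or
    all of [V1] plus an edge of the second part; taking complements in
    [V1 ∪ V2 ∪ {z}] exchanges these two shapes, which gives (i).  For (ii),
    complementation reverses inclusions and swaps "contains [z]" with "misses
    [z]", so the defining condition of [z]-decomposability is self-dual.  For
    (iii), a vertex in no (resp. every) hyperedge makes that condition vacuous. *)

Section GluingComplement.
Variables (T : finType) (V1 V2 : {set T}) (z : T).
Hypotheses (disV : [disjoint V1 & V2]) (zV : z \notin V1 :|: V2).

Let V := V1 :|: V2 :|: [set z].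
Let zV1 : z \in V1 = false. Proof. by apply: contraNF zV; rewrite inE => ->. Qed.
Let zV2 : z \in V2 = false. Proof. by apply: contraNF zV; rewrite inE orbC => ->. Qed.

Lemma setD_glue_first (e : {set T}) :
  e \subset V1 -> V :\: (z |: e) = V2 :|: (V1 :\: e).
Proof.
move=> /subsetP eV1; apply/setP => x; rewrite !inE.
have := eV1 x; have := disjointFr disV (x := x).
case: (x =P z) => [->|_] /=; first by rewrite zV1 zV2 andbF.
case: (x \in e); case: (x \in V1); case: (x \in V2) => //= disx subx;
  by [have := disx isT | have := subx isT].
Qed.

Lemma setD_glue_second (e : {set T}) :
  e \subset V2 -> V :\: (V1 :|: e) = z |: (V2 :\: e).
Proof.
move=> /subsetP eV2; apply/setP => x; rewrite !inE.
have := eV2 x; have := disjointFr disV (x := x).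
case: (x =P z) => [->|_] /=.
  by rewrite zV1 zV2 /=; case: (z \in e) => // _ /(_ isT).
case: (x \in e); case: (x \in V1); case: (x \in V2) => //= disx subx;
  by [have := disx isT | have := subx isT].
Qed.

End GluingComplement.

Lemma hcompl_glue (T : finType) (H1 H2 : hypergraph T) (z : T) :
  is_hypergraph H1 -> is_hypergraph H2 ->
  [disjoint hverts H1 & hverts H2] -> z \notin hverts H1 :|: hverts H2 ->
  hcompl (glue H1 H2 z) = glue (hcompl H2) (hcompl H1) z.
Proof.
move=> H1hyp H2hyp disV zV; rewrite /hcompl /glue /= [hverts H2 :|: _]setUC; congr Hypergraph.
rewrite imsetU -!imset_comp [RHS]setUC; congr (_ :|: _).
- by apply: eq_in_imset => e /H1hyp eV1; rewrite /= setD_glue_first.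
- by apply: eq_in_imset => e /H2hyp eV2; rewrite /= setD_glue_second.
Qed.

Lemma decomposable_hcompl (T : finType) (H : hypergraph T) (z : T) :
  z \in hverts H -> decomposable H z -> decomposable (hcompl H) z.
Proof.
move=> zV decH _ _ /imsetP[e eH ->] /imsetP[f fH ->].
rewrite !inE zV !andbT negbK => ze zf.
have fe : f :\ z \subset e by exact: decH.
apply/subsetP => x; rewrite !inE => /and3P[xz xe ->]; rewrite andbT.
by apply: contra xe => xf; apply: (subsetP fe); rewrite !inE xz.
Qed.

Lemma decomposable_isolated (T : finType) (H : hypergraph T) (u : T) :
  isolated H u -> decomposable H u.
Proof. by move=> isoH e f eH _ ue; move: (isoH e eH); rewrite ue. Qed.

Lemma decomposable_universal (T : finType) (H : hypergraph T) (u : T) :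
  universal H u -> decomposable H u.
Proof. by move=> uniH e f _ fH _ /negP; move: (uniH f fH). Qed.

Theorem proposition4 (T : finType) :
  (* (i) *)
  (forall (H H1 H2 : hypergraph T) (z : T),
     is_hypergraph H1 -> is_hypergraph H2 ->
     [disjoint hverts H1 & hverts H2] ->
     z \notin hverts H1 :|: hverts H2 ->
     H = glue H1 H2 z ->
     hcompl H = glue (hcompl H2) (hcompl H1) z) /\
  (* (ii) *)
  (forall (H : hypergraph T) (z : T),
     is_hypergraph H -> z \in hverts H ->
     decomposable H z -> decomposable (hcompl H) z) /\
  (* (iii) *)
  (forall (H : hypergraph T) (u : T),
     is_hypergraph H -> u \in hverts H ->
     isolated H u \/ universal H u -> decomposable H u).
Proof.
split; [|split].
- by move=> H H1 H2 z H1hyp H2hyp disV zV ->; exact: hcompl_glue.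
- by move=> H z _; exact: decomposable_hcompl.
- move=> H u _ _ [];
    [exact: decomposable_isolated | exact: decomposable_universal].
Qed.
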